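(* Let $\mathcal{F}$ be a fusion ring with structure constants $(N_{i,j}^k)$, indexed so that index $1$ is the unit. Suppose indices $i_1,\dots,i_9$ satisfy $N_{i_4,i_1}^{i_6},\ N_{i_5,i_4}^{i_2},\ N_{i_5,i_6}^{i_3},\ N_{i_7,i_9}^{i_1},\ N_{i_2,i_7}^{i_8},\ N_{i_8,i_9}^{i_3}\neq0$ and $\sum_kN_{i_4,i_7}^kN_{i_5^*,i_8}^kN_{i_6,i_9^*}^k=0$. Then $i_j\neq1$ for all $j\in\{4,\dots,9\}$.
   Context: A fusion ring is a ring which is a free $\mathbb{Z}$-module with finite basis $\{b_1,\dots,b_r\}$, $b_ib_j=\sum_kN_{i,j}^kb_k$, $N_{i,j}^k\in\mathbb{Z}_{\ge0}$, associative, unit $b_1$, duality $i\mapsto i^*$ with $N_{i,k}^1=N_{k,i}^1=\delta_{i^*,k}$, and Frobenius reciprocity $N_{i,j}^k=N_{i^*,k}^j=N_{k,j^*}^i$. *)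

From mathcomp Require Import all_boot.
Set Implicit Arguments. Unset Strict Implicit. Unset Printing Implicit Defensive.

(* A fusion ring of rank r = n.+1 with basis b_0, ..., b_n indexed by 'I_n.+1.
   The paper's index 1 (the unit b_1) is ord0 here.  The ring is determined by
   its structure constants N i j k = N_{i,j}^k (nonnegative integers) and the
   duality map d : i |-> i^*. *)
Definition fusion_ring (n : nat) (N : 'I_n.+1 -> 'I_n.+1 -> 'I_n.+1 -> nat)
    (d : 'I_n.+1 -> 'I_n.+1) : Prop :=
  (forall i j k t : 'I_n.+1,
      \sum_(s < n.+1) N i j s * N s k t = \sum_(s < n.+1) N j k s * N i s t) /\
  (forall i j : 'I_n.+1, N ord0 i j = (i == j) /\ N i ord0 j = (i == j)) /\
  (forall i k : 'I_n.+1, N i k ord0 = (d i == k) /\ N k i ord0 = (d i == k)) /\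
  (forall i j k : 'I_n.+1, N i j k = N (d i) k j /\ N i j k = N k (d j) i).

From mathcomp Require Import all_boot.
Set Implicit Arguments. Unset Strict Implicit. Unset Printing Implicit Defensive.

(* If one of i4, ..., i9 is the unit, two of the six nonvanishing constants
   are of the form N_{1,a}^b = delta_{a,b}, N_{a,1}^b = delta_{a,b} or
   N_{a,b}^1 = delta_{a^*,b}, which identifies some of the indices.  One
   summand of the vanishing triple sum then has a factor 1, and by Frobenius
   reciprocity its two other factors are two of the nonvanishing constants. *)

Section FusionRingAxioms.

Variables (n : nat) (N : 'I_n.+1 -> 'I_n.+1 -> 'I_n.+1 -> nat)
  (d : 'I_n.+1 -> 'I_n.+1).
Hypothesis HF : fusion_ring N d.

Lemma N_unitl i j : N ord0 i j = (i == j).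
Proof. by case: HF => _ [/(_ i j) []]. Qed.

Lemma N_unitr i j : N i ord0 j = (i == j).
Proof. by case: HF => _ [/(_ i j) []]. Qed.

Lemma N_dualr i k : N i k ord0 = (d i == k).
Proof. by case: HF => _ [_ [/(_ i k) []]]. Qed.

Lemma N_duall i k : N k i ord0 = (d i == k).
Proof. by case: HF => _ [_ [/(_ i k) []]]. Qed.

Lemma N_frobl i j k : N (d i) k j = N i j k.
Proof. by case: HF => _ [_ [_ /(_ i j k) [->]]]. Qed.

Lemma N_frobr i j k : N k (d j) i = N i j k.
Proof. by case: HF => _ [_ [_ /(_ i j k) [_ ->]]]. Qed.

Lemma dualK : involutive d.
Proof. by move=> i; have := N_dualr (d i) i; rewrite N_duall eqxx; case: eqP. Qed.

Lemma dual0 : d ord0 = ord0.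
Proof. by have := N_dualr ord0 ord0; rewrite N_unitl eqxx; case: eqP. Qed.

Lemma N_unitl_eq i j : N ord0 i j != 0 -> i = j.
Proof. by rewrite N_unitl; case: (i =P j). Qed.

Lemma N_unitr_eq i j : N i ord0 j != 0 -> i = j.
Proof. by rewrite N_unitr; case: (i =P j). Qed.

Lemma N_dualr_eq i k : N i k ord0 != 0 -> d i = k.
Proof. by rewrite N_dualr; case: (d i =P k). Qed.

Lemma N_rotl i j k : N (d k) i (d j) = N i j k.
Proof. by rewrite N_frobl N_frobr. Qed.

Lemma N_rotr i j k : N j (d k) (d i) = N i j k.
Proof. by rewrite -(N_rotl j) !dualK. Qed.

End FusionRingAxioms.

Theorem lemma7p14 (n : nat) (N : 'I_n.+1 -> 'I_n.+1 -> 'I_n.+1 -> nat)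
    (d : 'I_n.+1 -> 'I_n.+1) (HF : fusion_ring N d)
    (i1 i2 i3 i4 i5 i6 i7 i8 i9 : 'I_n.+1) :
  N i4 i1 i6 != 0 -> N i5 i4 i2 != 0 -> N i5 i6 i3 != 0 ->
  N i7 i9 i1 != 0 -> N i2 i7 i8 != 0 -> N i8 i9 i3 != 0 ->
  \sum_(k < n.+1) N i4 i7 k * N (d i5) i8 k * N i6 (d i9) k = 0 ->
  (i4 != ord0) /\ (i5 != ord0) /\ (i6 != ord0) /\ (i7 != ord0) /\ (i8 != ord0) /\ (i9 != ord0).
Proof.
move=> H1 H2 H3 H4 H5 H6 /eqP; rewrite sum_nat_eq0 => /forallP term0.
split; [|split; [|split; [|split; [|split]]]]; apply/eqP => unit_i; subst.
- move: (term0 i7); apply/negP.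
  rewrite -(N_unitl_eq HF H1) (N_unitr_eq HF H2) (N_unitl HF) eqxx mul1n.
  by rewrite (N_frobl HF) (N_frobr HF) muln_eq0 negb_or H5 H4.
- move: (term0 i8); apply/negP.
  rewrite (N_unitl_eq HF H2) (N_unitl_eq HF H3) (dual0 HF) (N_unitl HF) eqxx muln1.
  by rewrite (N_frobr HF) muln_eq0 negb_or H5 H6.
- move: (term0 (d i9)); apply/negP.
  rewrite (N_unitl HF) eqxx muln1 -{1}(dualK HF i4) !(N_rotl HF).
  by rewrite (N_dualr_eq HF H1) (N_unitr_eq HF H3) muln_eq0 negb_or H4 H6.
- move: (term0 i4); apply/negP.
  rewrite (N_unitl_eq HF H4) -(N_unitr_eq HF H5) (N_unitr HF) eqxx mul1n.
  by rewrite (N_frobl HF) (N_frobr HF) muln_eq0 negb_or H2 H1.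
- move: (term0 (d i5)); apply/negP.
  rewrite -(N_dualr_eq HF H5) (N_unitl_eq HF H6) (N_unitr HF) eqxx muln1.
  by rewrite !(N_rotr HF) muln_eq0 negb_or H2 H3.
- move: (term0 i6); apply/negP.
  rewrite (N_unitr_eq HF H4) (N_unitr_eq HF H6) (dual0 HF) (N_unitr HF) eqxx muln1.
  by rewrite (N_frobl HF) muln_eq0 negb_or H1 H3.
Qed.
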